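(* Let $\alpha>1$, $\varepsilon>0$, $\delta\in(0,1)$, and let $\pi^*$ be the optimal partition selection primitive ($\pi^*(0)=0$, $\pi^*(n)=L(\pi^*(n-1))$ with $L(q)=\max\{p\in[q,1]: D^\delta_\alpha(\mathrm{Ber}(p)\|\mathrm{Ber}(q))\le\varepsilon\text{ and } D^\delta_\alpha(\mathrm{Ber}(q)\|\mathrm{Ber}(p))\le\varepsilon\}$). Then $\pi^*$ is non-decreasing, $n_d := \min\{n\in\mathbb{N}:\pi^*(n)=1\}$ is finite with $n_d\le\lceil1/\delta\rceil$, the function $\Pi(x) = \pi^*(n_d-x)-\pi^*(n_d-1-x)$ for $x\in\{0,\dots,n_d-1\}$ is a probability distribution, and with $\tau = n_d-1$ we have, for all $n\in\mathbb{Z}_{\ge0}$, $$\Pr_{Z\sim\Pi}(n+Z>\tau) = \pi^*(n).$$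
   Context: $\mathrm{Ber}(p)$: Bernoulli distribution. For $\alpha>1$, $D_\alpha(P\|Q)=\frac{1}{\alpha-1}\log\sum_x P(x)^\alpha Q(x)^{1-\alpha}$ and $D^\delta_\alpha(P\|Q)=\inf\{D_\alpha(P'\|Q'): P=(1-\delta)P'+\delta P'',\ Q=(1-\delta)Q'+\delta Q''\}$ over probability distributions. *)

From HB Require Import structures.
From mathcomp Require Import all_boot all_order all_algebra.
From mathcomp Require Import all_classical all_reals all_analysis.
Set Implicit Arguments. Unset Strict Implicit. Unset Printing Implicit Defensive.
Import Order.TTheory GRing.Theory Num.Theory.
Local Open Scope classical_set_scope.
Local Open Scope ring_scope.

Section RenyiDefs.
Variable R : realType.

Definition is_distr (T : finType) (P : T -> R) : Prop :=
  (forall x, 0 <= P x) /\ \sum_(x : T) P x = 1.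

Definition Ber (p : R) : bool -> R := fun b => if b then p else 1 - p.

(* One summand P(x)^a Q(x)^(1-a), a > 1, with the standard conventions
   0 * (anything) = 0 (in particular 0^a 0^(1-a) = 0) and p^a 0^(1-a) = +oo for p > 0. *)
Definition renyi_term (a p q : R) : \bar R :=
  if p == 0 then 0%E
  else if q == 0 then +oo%E
  else (p `^ a * q `^ (1 - a))%:E.

Definition renyi (T : finType) (a : R) (P Q : T -> R) : \bar R :=
  match (\sum_(x : T) renyi_term a (P x) (Q x))%E with
  | r%:E => (ln r / (a - 1))%:E
  | +oo%E => +oo%E
  | -oo%E => -oo%E
  end.

Definition srenyi (T : finType) (a delta : R) (P Q : T -> R) : \bar R :=
  ereal_inf [set dv | exists (P' P'' Q' Q'' : T -> R),
    [/\ is_distr P' /\ is_distr P'' /\ is_distr Q' /\ is_distr Q'',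
        (forall x, P x = (1 - delta) * P' x + delta * P'' x),
        (forall x, Q x = (1 - delta) * Q' x + delta * Q'' x) &
        dv = renyi a P' Q']].

(* L(q) = max { p in [q,1] : D^d_a(Ber p||Ber q) <= eps and D^d_a(Ber q||Ber p) <= eps }
   (formalized as the supremum of that set, which is the max when attained). *)
Definition Lsel (a eps delta q : R) : R :=
  sup [set p : R | [/\ q <= p, p <= 1,
        (srenyi a delta (Ber p) (Ber q) <= eps%:E)%E &
        (srenyi a delta (Ber q) (Ber p) <= eps%:E)%E]].

Definition pistar (a eps delta : R) (n : nat) : R := iter n (Lsel a eps delta) 0.

Definition PiDist (a eps delta : R) (nd x : nat) : R :=
  pistar a eps delta (nd - x) - pistar a eps delta (nd - 1 - x).

End RenyiDefs.

From HB Require Import structures.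
From mathcomp Require Import all_boot all_order all_algebra.
From mathcomp Require Import all_classical all_reals all_analysis.
From mathcomp Require Import ring lra zify.
Set Implicit Arguments. Unset Strict Implicit. Unset Printing Implicit Defensive.
Import Order.TTheory GRing.Theory Num.Theory.
Local Open Scope classical_set_scope.
Local Open Scope ring_scope.

(* If |p - q| <= delta, then Ber p and Ber q are delta-mixtures of one common
   Bernoulli distribution with two others, so both approximate divergences
   vanish and p is admissible in L(q); hence L(q) >= min(q + delta, 1) and
   pi*(n) >= min(n delta, 1), which gives n_d <= ceil(1/delta).  The tail
   probabilities of Pi telescope to pi*(min(n, n_d)) - pi*(0) = pi*(n). *)

Section Divergences.
Variable R : realType.

Lemma renyi_term_diag (a c : R) : 0 <= c -> renyi_term a c c = c%:E.
Proof.
move=> c_ge0; rewrite /renyi_term; case: eqP => [->//|/eqP c_neq0].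
by rewrite -powRD ?c_neq0 ?implybT // addrC subrK powRr1.
Qed.

Lemma renyi_diag (T : finType) (a : R) (P : T -> R) :
  is_distr P -> renyi a P P = 0%E.
Proof.
move=> [P_ge0 sumP1]; rewrite /renyi.
under eq_bigr => x _ do rewrite renyi_term_diag //.
by rewrite sumEFin sumP1 ln1 mul0r.
Qed.

Lemma srenyi_common_le0 (T : finType) (a d : R) (C P' Q' : T -> R) :
  is_distr C -> is_distr P' -> is_distr Q' ->
  (srenyi a d (fun x => (1 - d) * C x + d * P' x)%R
              (fun x => (1 - d) * C x + d * Q' x)%R <= 0)%E.
Proof.
move=> dC dP' dQ'; rewrite -(renyi_diag a dC).
by apply: ereal_inf_lbound; exists C, P', C, Q'.
Qed.

Lemma is_distr_Ber (r : R) : 0 <= r <= 1 -> is_distr (Ber r).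
Proof. by move=> /andP[r_ge0 r_le1]; split; [case=> /=|rewrite big_bool /=]; lra. Qed.

Lemma Ber_mix (d r s : R) :
  Ber ((1 - d) * r + d * s) = (fun b => (1 - d) * Ber r b + d * Ber s b).
Proof. by apply/funext; case=> /=; ring. Qed.

Lemma divr_in01 (u v : R) : 0 <= u -> u <= v -> 0 < v -> 0 <= u / v <= 1.
Proof.
move=> u_ge0 uv v_gt0.
by rewrite divr_ge0 ?ler_pdivrMr ?mul1r ?(ltW v_gt0).
Qed.

(* The common component carries mass (p - d)/(1 - d) if p > d, and 0 otherwise. *)
Lemma Ber_common_mixture (d p q : R) : 0 < d < 1 ->
  0 <= q -> q <= p -> p <= 1 -> p - q <= d ->
  exists r s t : R, [/\ 0 <= r <= 1, 0 <= s <= 1, 0 <= t <= 1,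
    p = (1 - d) * r + d * s & q = (1 - d) * r + d * t].
Proof.
move=> /andP[d_gt0 d_lt1] q_ge0 qp p_le1 pqd.
have d_neq0 : d != 0 by rewrite gt_eqF.
have d'_neq0 : 1 - d != 0 by rewrite subr_eq0 gt_eqF.
have [pd|dp] := lerP p d.
  exists 0, (p / d), (q / d); split.
  - by rewrite lexx ler01.
  - by apply: divr_in01 => //; lra.
  - by apply: divr_in01 => //; lra.
  - by field.
  - by field.
exists ((p - d) / (1 - d)), 1, ((q - p + d) / d); split.
- by apply: divr_in01; lra.
- by rewrite ler01 lexx.
- by apply: divr_in01 => //; lra.
- by field.
- by field; apply/andP.
Qed.

Lemma srenyi_Ber_close (a d p q : R) : 0 < d < 1 ->
  0 <= q -> q <= p -> p <= 1 -> p - q <= d ->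
  (srenyi a d (Ber p) (Ber q) <= 0)%E /\ (srenyi a d (Ber q) (Ber p) <= 0)%E.
Proof.
move=> d01 q_ge0 qp p_le1 pqd.
have [r [s [t [r01 s01 t01 -> ->]]]] := Ber_common_mixture d01 q_ge0 qp p_le1 pqd.
by rewrite !Ber_mix; split; apply: srenyi_common_le0; apply: is_distr_Ber.
Qed.

End Divergences.

Section Selection.
Variables (R : realType) (a eps d : R).
Hypotheses (eps_ge0 : 0 <= eps) (d_gt0 : 0 < d) (d_lt1 : d < 1).
Local Notation L := (Lsel a eps d).
Local Notation P := (pistar a eps d).

Section Step.
Variable q : R.
Hypothesis q01 : 0 <= q <= 1.

Let S := [set p : R | [/\ q <= p, p <= 1,
  (srenyi a d (Ber p) (Ber q) <= eps%:E)%E &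
  (srenyi a d (Ber q) (Ber p) <= eps%:E)%E]].

Let S_close p : q <= p -> p <= 1 -> p - q <= d -> S p.
Proof.
move: q01 => /andP[q_ge0 _] qp p_le1 pqd.
have d01 : 0 < d < 1 by rewrite d_gt0 d_lt1.
have [lePQ leQP] := srenyi_Ber_close a d01 q_ge0 qp p_le1 pqd.
by split=> //; apply: le_trans (lee_tofin eps_ge0); [exact: lePQ|exact: leQP].
Qed.

Let S_ub : ubound S 1. Proof. by move=> p []. Qed.

Let S_self : S q.
Proof. by case/andP: q01 => _ q_le1; apply: S_close; rewrite // subrr ltW. Qed.

Lemma Lsel_le1 : L q <= 1.
Proof. by apply: ge_sup S_ub; exists q; exact: S_self. Qed.

Lemma Lsel_ge_close p : q <= p -> p <= 1 -> p - q <= d -> p <= L q.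
Proof. by move=> qp p_le1 pqd; apply: ub_le_sup; [exists 1|exact: S_close]. Qed.

Lemma Lsel_ge_min : Num.min (q + d) 1 <= L q.
Proof.
have [_ q_le1] := andP q01.
apply: Lsel_ge_close.
- by rewrite le_min lerDl ltW.
- by rewrite ge_min lexx orbT.
- by rewrite lerBlDl addrC ge_min lexx.
Qed.

Lemma Lsel_ge : q <= L q.
Proof. by apply: ub_le_sup; [exists 1|exact: S_self]. Qed.

End Step.

Lemma pistar_S n : P n.+1 = L (P n).
Proof. by []. Qed.

Lemma pistar_in01 n : 0 <= P n <= 1.
Proof.
elim: n => [|n IH]; first by rewrite /= lexx ler01.
rewrite pistar_S Lsel_le1 // andbT.
by apply: le_trans (Lsel_ge IH); move: IH => /andP[].
Qed.

Lemma pistar_mono : {homo P : m n / (m <= n)%N >-> m <= n}.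
Proof. by apply/nondecreasing_seqP => n; rewrite pistar_S Lsel_ge ?pistar_in01. Qed.

Lemma pistar_ge_min n : Num.min (n%:R * d) 1 <= P n.
Proof.
elim: n => [|n IH]; first by rewrite mul0r ge_min lexx.
rewrite pistar_S; apply: le_trans (Lsel_ge_min (pistar_in01 n)).
rewrite -addn1 natrD mulrDl mul1r le_min !ge_min lexx orbT andbT lerD2r.
move: IH; rewrite ge_min => /orP[-> // | P_ge1].
by rewrite (le_trans P_ge1) ?orbT // lerDl ltW.
Qed.

Lemma pistar_eq1 n : 1 <= n%:R * d -> P n = 1.
Proof.
move=> nd_ge1; apply/eqP; rewrite eq_le; case/andP: (pistar_in01 n) => _ ->.
by apply: le_trans (pistar_ge_min n); rewrite le_min nd_ge1 lexx.
Qed.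

Lemma pistar_eq1_ge m n : P m = 1 -> (m <= n)%N -> P n = 1.
Proof.
move=> Pm1 mn; apply/eqP; rewrite eq_le; case/andP: (pistar_in01 n) => _ ->.
by rewrite -Pm1 pistar_mono.
Qed.

End Selection.

Lemma sum_rev_increments (R : zmodType) (f : nat -> R) (nd n : nat) :
  \sum_(x < nd | (nd - 1 < n + x)%N) (f (nd - x)%N - f (nd - 1 - x)%N)
  = f (minn n nd) - f 0%N.
Proof.
rewrite -(telescope_sumr _ (leq0n _)) big_mkord.
rewrite (big_ord_widen nd (fun k => f k.+1 - f k) (geq_minr n nd)).
rewrite (reindex_inj rev_ord_inj); apply: eq_big => [k|k _] /=; have := ltn_ord k.
- by rewrite leq_min => k_lt; apply/idP/idP; lia.
- by move=> k_lt; congr (f _ - f _); lia.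
Qed.

Theorem mainTheorem10 (R : realType) (a eps delta : R)
  (ha : 1 < a) (heps : 0 < eps) (hd0 : 0 < delta) (hd1 : delta < 1) :
  (forall m n : nat, (m <= n)%N -> pistar a eps delta m <= pistar a eps delta n) /\
  exists nd : nat,
    [/\ pistar a eps delta nd = 1 /\
          (forall n : nat, pistar a eps delta n = 1 -> (nd <= n)%N),
        (nd%:Z <= Num.ceil (delta^-1))%R,
        (forall x : nat, (x < nd)%N -> 0 <= PiDist a eps delta nd x),
        \sum_(x < nd) PiDist a eps delta nd x = 1 &
        (forall n : nat,
           \sum_(x < nd | (nd - 1 < n + x)%N) PiDist a eps delta nd x
           = pistar a eps delta n)].
Proof.
have eps_ge0 := ltW heps.
have mono := pistar_mono a eps_ge0 hd0 hd1.
split=> [m n|]; first exact: mono.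
set N := `|Num.ceil delta^-1|%N.
have N_def : N%:Z = Num.ceil delta^-1.
  by rewrite gez0_abs // ceil_ge0 (lt_le_trans (ltrN10 _)) // invr_ge0 ltW.
have PN1 : pistar a eps delta N = 1.
  apply: (pistar_eq1 a eps_ge0 hd0 hd1); rewrite -ler_pdivrMr // div1r.
  by rewrite pmulrn N_def ceil_ge.
have ex_pistar_eq1 : exists n, pistar a eps delta n == 1 by exists N; apply/eqP.
have [nd /eqP Pnd1 nd_min] := ex_minnP ex_pistar_eq1.
have nd_min' n : pistar a eps delta n = 1 -> (nd <= n)%N by move/eqP/nd_min.
have tail_prob n : \sum_(x < nd | (nd - 1 < n + x)%N) PiDist a eps delta nd x
              = pistar a eps delta (minn n nd) by rewrite sum_rev_increments subr0.
exists nd; split=> //.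
- by rewrite -N_def lez_nat nd_min'.
- by move=> x x_lt; rewrite subr_ge0 mono //; lia.
- have <- : pistar a eps delta (minn nd nd) = 1 by rewrite minnn.
  by rewrite -tail_prob; apply: eq_bigl => x; have := ltn_ord x; lia.
- move=> n; rewrite tail_prob; case: leqP => [//|/ltnW nd_le].
  by rewrite Pnd1 (pistar_eq1_ge eps_ge0 hd0 hd1 Pnd1 nd_le).
Qed.
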